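(* Assume: - the strengthened triangle inequality under the square holds with constant $a_0$; - the forms $\overline a_{l,i}$ provide a positive semi-definite splitting with constant $b_0$; - the subspaces are locally stable with constant $C_1$. Let $v_h\in V_h$ and define recursively $v_L=v_h$. For $l=L,L-1,\dots,1$, let $v_l=v_{l-1}+\sum_{i=1}^{P_l}v_{l,i}$ be a decomposition of $v_l\in V_{h,l}$ as in the definition of local stability. This yields $v_h=v_0+\sum_{l=1}^L\sum_{i=1}^{P_l}v_{l,i}$ with $v_0\in V_{h,0}$. Then, with $C=2(1+a_0b_0C_1)$, $$\|v_0\|_{a_h}^2+\sum_{l=1}^L\sum_{i=1}^{P_l}\|v_{l,i}\|_{a_h}^2\le C^L\Bigl(1+\frac{b_0C_1}{C-1}\Bigr)\|v_h\|_{a_h}^2.$$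
   Context: Let $V_h$ be a finite-dimensional real vector space with a symmetric positive definite bilinear form $a_h$, and $\|v\|_{a_h}=\sqrt{a_h(v,v)}$. Let $L\ge1$ and let $V_{h,0}\subseteq V_{h,1}\subseteq\cdots\subseteq V_{h,L}=V_h$ be nested subspaces. For each level $1\le l\le L$ let $P_l\in\mathbb N$ and let $V_{h,l,i}\subseteq V_{h,l}$, $i=1,\dots,P_l$, be subspaces. For each such $(l,i)$ let $\overline V_{h,l,i}$ be a finite-dimensional real vector space, $r_{l,i}:V_{h,l}\to\overline V_{h,l,i}$ a linear map, and $\overline a_{l,i}$ a symmetric positive semi-definite bilinear form on $\overline V_{h,l,i}$ with seminorm $|w|_{\overline a_{l,i}}=\sqrt{\overline a_{l,i}(w,w)}$. Strengthened triangle inequality under the square with constant $a_0>0$: for every $1\le l\le L$ and every choice of $v_{l,i}\in V_{h,l,i}$, $$\Bigl\|\sum_{i=1}^{P_l}v_{l,i}\Bigr\|_{a_h}^2\le a_0\sum_{i=1}^{P_l}\|v_{l,i}\|_{a_h}^2.$$ Positive semi-definite splitting with constant $b_0>0$: for every $1\le l\le L$ and all $v_l\in V_{h,l}$, $$\sum_{i=1}^{P_l}|r_{l,i}v_l|_{\overline a_{l,i}}^2\le b_0\|v_l\|_{a_h}^2.$$ Local stability with constant $C_1>0$: for every $1\le l\le L$ and every $v_l\in V_{h,l}$ there is a decomposition $v_l=v_{l-1}+\sum_{i=1}^{P_l}v_{l,i}$ with $v_{l-1}\in V_{h,l-1}$ and $v_{l,i}\in V_{h,l,i}$ such that $$\|v_{l,i}\|_{a_h}^2\le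 C_1|r_{l,i}v_l|_{\overline a_{l,i}}^2\quad\text{for all }1\le i\le P_l.$$ The constants $a_0,b_0,C_1$ are independent of $l$. *)

From HB Require Import structures.
From mathcomp Require Import all_boot all_order all_algebra.
From mathcomp Require Import reals.
Set Implicit Arguments. Unset Strict Implicit. Unset Printing Implicit Defensive.
Import Order.TTheory GRing.Theory Num.Theory.
Local Open Scope ring_scope.

Definition sym_bilinear (R : realType) (U : lmodType R) (b : U -> U -> R) : Prop :=
  (forall u v, b u v = b v u) /\
  (forall (c : R) (u v w : U), b (c *: u + v) w = c * b u w + b v w).

Definition spd_form (R : realType) (U : lmodType R) (b : U -> U -> R) : Prop :=
  sym_bilinear b /\ (forall v, v != 0 -> 0 < b v v).

Definition spsd_form (R : realType) (U : lmodType R) (b : U -> U -> R) : Prop :=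
  sym_bilinear b /\ (forall v, 0 <= b v v).

From HB Require Import structures.
From mathcomp Require Import all_boot all_order all_algebra.
From mathcomp Require Import reals.
From mathcomp Require Import ring lra zify.
Import Order.TTheory GRing.Theory Num.Theory.
Local Open Scope ring_scope.

(* Write x_l = ||v_l||^2 and e_l = sum_i ||v_{l,i}||^2.  One level of the
   recursion gives two estimates:
   - local stability and the semi-definite splitting give e_l <= b0 C1 x_l;
   - since v_{l-1} = v_l - sum_i v_{l,i}, the parallelogram law and the
     strengthened triangle inequality give x_{l-1} <= 2 (1 + a0 b0 C1) x_l.
   Iterating the second estimate gives x_l <= C^(L-l) x_L, and summing the
   first one against the geometric series sum_l C^(L-l) = (C^L - 1)/(C - 1)
   gives the claimed bound. *)

Section BilinearForms.
Context {R : realType} {U : lmodType R} {b : U -> U -> R}.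
Hypothesis b_sym_bilinear : sym_bilinear b.

Lemma formDl (u v w : U) : b (u + v) w = b u w + b v w.
Proof.
by rewrite -[u in LHS]scale1r (proj2 b_sym_bilinear) mul1r.
Qed.

Lemma formBl (u v w : U) : b (u - v) w = b u w - b v w.
Proof.
by rewrite addrC -scaleN1r (proj2 b_sym_bilinear) mulN1r addrC.
Qed.

Lemma formDr (u v w : U) : b w (u + v) = b w u + b w v.
Proof. by rewrite (proj1 b_sym_bilinear) formDl !(proj1 b_sym_bilinear w). Qed.

Lemma formBr (u v w : U) : b w (u - v) = b w u - b w v.
Proof. by rewrite (proj1 b_sym_bilinear) formBl !(proj1 b_sym_bilinear w). Qed.

Lemma parallelogram (x y : U) :
  b (x + y) (x + y) + b (x - y) (x - y) = 2 * b x x + 2 * b y y.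
Proof.
rewrite !formBl !formBr !formDl !formDr (proj1 b_sym_bilinear y x); ring.
Qed.

Lemma form_sub_le (x y : U) : 0 <= b (x + y) (x + y) ->
  b (x - y) (x - y) <= 2 * b x x + 2 * b y y.
Proof. by move=> ge0; rewrite -parallelogram lerDr. Qed.

End BilinearForms.

Lemma spd_form_spsd {R : realType} {U : lmodType R} {b : U -> U -> R} :
  spd_form b -> spsd_form b.
Proof.
move=> [bsb bpos]; split=> // x; case: (eqVneq x 0) => [->|/bpos/ltW //].
by rewrite -[X in b X _](subrr 0) formBl // subrr.
Qed.

Lemma geometric_sum (R : comNzRingType) (C : R) (n : nat) :
  (C - 1) * \sum_(1 <= l < n.+1) C ^+ (n - l) = C ^+ n - 1.
Proof.
elim: n => [|n IH]; first by rewrite big_geq // mulr0 expr0 subrr.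
rewrite big_nat_recr //= subnn expr0.
rewrite (eq_big_nat _ _ (F2 := fun l => C * C ^+ (n - l))); last first.
  by move=> i /andP[_ hi]; rewrite subSn // exprS.
by rewrite -mulr_sumr mulrDr mulrCA IH exprS; ring.
Qed.

Section Recursion.
(* x l plays the role of ||v_l||^2 and e l of the energy of the level-l pieces. *)
Variables (R : realFieldType) (L : nat) (x e : nat -> R) (C K : R).
Hypothesis C_gt1 : 1 < C.
Hypothesis K_ge0 : 0 <= K.
Hypothesis xL_ge0 : 0 <= x L.
Hypothesis energy_le : forall l, (1 <= l <= L)%N -> e l <= K * x l.
Hypothesis growth_le : forall l, (1 <= l <= L)%N -> x l.-1 <= C * x l.

Let C_ge0 : 0 <= C. Proof. exact: ltW (lt_trans ltr01 C_gt1). Qed.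

Lemma backward_growth k : (k <= L)%N -> x (L - k)%N <= C ^+ k * x L.
Proof.
elim: k => [|k IH] kL; first by rewrite subn0 expr0 mul1r.
have -> : (L - k.+1 = (L - k).-1)%N by lia.
apply: le_trans (growth_le _ _) _; first by apply/andP; split; lia.
have IHk : x (L - k)%N <= C ^+ k * x L by apply: IH; lia.
by rewrite exprS -mulrA; apply: ler_wpM2l IHk.
Qed.

Lemma multilevel_recursion :
  x 0%N + \sum_(1 <= l < L.+1) e l <= C ^+ L * (1 + K / (C - 1)) * x L.
Proof.
have C1_neq0 : C - 1 != 0 by rewrite subr_eq0 gt_eqF.
have level_le l : (1 <= l < L.+1)%N -> e l <= K * x L * C ^+ (L - l).
  rewrite ltnS => lL; apply: le_trans (energy_le _ lL) _.
  rewrite -mulrA ler_wpM2l // mulrC.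
  by have := backward_growth _ (leq_subr l L); rewrite subKn //; case/andP: lL.
have sum_le := ler_sum_nat level_le; rewrite -mulr_sumr in sum_le.
have S_eq : \sum_(1 <= l < L.+1) C ^+ (L - l) = (C ^+ L - 1) / (C - 1).
  by rewrite -geometric_sum; field.
have coarse_le := backward_growth _ (leqnn L); rewrite subnn in coarse_le.
rewrite S_eq in sum_le.
have q_ge0 : 0 <= K / (C - 1) * x L by rewrite mulr_ge0 // divr_ge0 // subr_ge0 ltW.
have split_eq : K * x L * ((C ^+ L - 1) / (C - 1)) =
                K / (C - 1) * x L * C ^+ L - K / (C - 1) * x L by field.
rewrite split_eq in sum_le.
lra.
Qed.

End Recursion.

Lemma level_energy_le (R : realDomainType) (n : nat) (s q : nat -> R)
    (b0 C1 X : R) :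
  0 <= C1 ->
  (forall i, (1 <= i <= n)%N -> s i <= C1 * q i) ->
  \sum_(1 <= i < n.+1) q i <= b0 * X ->
  \sum_(1 <= i < n.+1) s i <= b0 * C1 * X.
Proof.
move=> C1_ge0 s_le q_le.
have sum_s_le : \sum_(1 <= i < n.+1) s i <= \sum_(1 <= i < n.+1) C1 * q i.
  by apply: ler_sum_nat => i; rewrite ltnS; exact: s_le.
apply: le_trans sum_s_le _.
by rewrite -mulr_sumr (mulrC b0) -mulrA; apply: ler_wpM2l.
Qed.

Lemma coarse_part_le (R : realType) (U : lmodType R) (b : U -> U -> R)
    (x y : U) (a0 s E : R) :
  spsd_form b -> 0 <= a0 ->
  b y y <= a0 * s -> s <= E * b x x ->
  b (x - y) (x - y) <= 2 * (1 + a0 * E) * b x x.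
Proof.
move=> [bsb b_ge0] a0_ge0 y_le s_le.
apply: le_trans (form_sub_le bsb x y (b_ge0 _)) _.
have : a0 * s <= a0 * (E * b x x) by rewrite ler_wpM2l.
lra.
Qed.

Theorem lemma3p10
  (R : realType) (V : vectType R) (a : V -> V -> R)
  (L : nat) (Vl : nat -> {vspace V}) (P : nat -> nat)
  (Vli : nat -> nat -> {vspace V})
  (W : nat -> nat -> vectType R)
  (r : forall l i, {linear V -> W l i})
  (abar : forall l i, W l i -> W l i -> R)
  (a0 b0 C1 : R) :
  (1 <= L)%N ->
  spd_form a ->
  (forall l, (l < L)%N -> (Vl l <= Vl l.+1)%VS) ->
  Vl L = fullv ->
  (forall l i, (1 <= l <= L)%N -> (1 <= i <= P l)%N -> (Vli l i <= Vl l)%VS) ->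
  (forall l i, (1 <= l <= L)%N -> (1 <= i <= P l)%N -> spsd_form (abar l i)) ->
  0 < a0 -> 0 < b0 -> 0 < C1 ->
  (* strengthened triangle inequality under the square *)
  (forall l, (1 <= l <= L)%N -> forall u : nat -> V,
     (forall i, (1 <= i <= P l)%N -> u i \in Vli l i) ->
     a (\sum_(1 <= i < (P l).+1) u i) (\sum_(1 <= i < (P l).+1) u i)
       <= a0 * \sum_(1 <= i < (P l).+1) a (u i) (u i)) ->
  (* positive semi-definite splitting *)
  (forall l, (1 <= l <= L)%N -> forall v, v \in Vl l ->
     \sum_(1 <= i < (P l).+1) abar l i (r l i v) (r l i v) <= b0 * a v v) ->
  (* local stability *)
  (forall l, (1 <= l <= L)%N -> forall v, v \in Vl l ->
     exists (vprev : V) (u : nat -> V),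
       [/\ vprev \in Vl l.-1,
           (forall i, (1 <= i <= P l)%N -> u i \in Vli l i),
           v = vprev + \sum_(1 <= i < (P l).+1) u i &
           (forall i, (1 <= i <= P l)%N ->
              a (u i) (u i) <= C1 * abar l i (r l i v) (r l i v))]) ->
  (* the recursively constructed decomposition *)
  forall (vh : V) (v : nat -> V) (w : nat -> nat -> V),
    v L = vh ->
    (forall l, (1 <= l <= L)%N ->
       [/\ v l.-1 \in Vl l.-1,
           (forall i, (1 <= i <= P l)%N -> w l i \in Vli l i),
           v l = v l.-1 + \sum_(1 <= i < (P l).+1) w l i &
           (forall i, (1 <= i <= P l)%N ->
              a (w l i) (w l i) <= C1 * abar l i (r l i (v l)) (r l i (v l)))]) ->
    let C := 2 * (1 + a0 * b0 * C1) in
    a (v 0%N) (v 0%N)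
      + \sum_(1 <= l < L.+1) \sum_(1 <= i < (P l).+1) a (w l i) (w l i)
    <= C ^+ L * (1 + b0 * C1 / (C - 1)) * a vh vh.
Proof.
move=> _ /spd_form_spsd a_spsd _ VlL _ _ a0_gt0 b0_gt0 C1_gt0 sti splitting _ vh v w vL_eq dec.
cbv zeta; set C := 2 * (1 + a0 * b0 * C1).
(* Each v l lies in V_{h,l}: it is the coarse part of level l+1, or v_h. *)
have v_mem l : (1 <= l <= L)%N -> v l \in Vl l.
  move=> /andP[l_ge1 lL]; case: (ltnP l L) => [lL' | Ll].
    by have [] := dec l.+1 (lL' : (1 <= l.+1 <= L)%N).
  have -> : l = L by lia.
  by rewrite VlL memvf.
have energy l : (1 <= l <= L)%N ->
    \sum_(1 <= i < (P l).+1) a (w l i) (w l i) <= b0 * C1 * a (v l) (v l).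
  move=> lL; have [_ _ _ w_le] := dec l lL.
  exact: level_energy_le (ltW C1_gt0) w_le (splitting l lL _ (v_mem l lL)).
have growth l : (1 <= l <= L)%N -> a (v l.-1) (v l.-1) <= C * a (v l) (v l).
  move=> lL; have [_ w_mem v_eq _] := dec l lL.
  have -> : v l.-1 = v l - \sum_(1 <= i < (P l).+1) w l i by rewrite v_eq addrK.
  rewrite /C -[a0 * b0 * C1]mulrA.
  exact: coarse_part_le a_spsd (ltW a0_gt0) (sti l lL _ w_mem) (energy l lL).
have C_gt1 : 1 < C by rewrite /C; have := mulr_gt0 (mulr_gt0 a0_gt0 b0_gt0) C1_gt0; lra.
rewrite -vL_eq.
have K_ge0 : 0 <= b0 * C1 by rewrite mulr_ge0 // ltW.
exact: (@multilevel_recursion R L (fun l => a (v l) (v l))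
          (fun l => \sum_(1 <= i < (P l).+1) a (w l i) (w l i)) C (b0 * C1)
          C_gt1 K_ge0 (proj2 a_spsd _) energy growth).
Qed.
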